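(* Assume $\mathbf{P.0}$ has an optimal solution, with optimal value $OPT$. Then $\mathbf{P.2}$ has a feasible solution, and an optimal solution $A^{P2}$ of $\mathbf{P.2}$ satisfies $f(A^{P2})\ge (1-1/e)^2\, OPT$. In particular, there exists a set $A\subseteq V$ with $|A|\le b$, $\lfloor\alpha_t\rfloor\le|A\cap V_t|\le\lceil\beta_t\rceil$ for all $t\in[m]$, and $f(A)\ge(1-1/e)^2\,OPT$.
   Context: Let $V$ be a finite set of $n$ items and $f:2^V\to\mathbb{R}_{\ge 0}$ a non-negative monotone submodular function. Items are divided into pairwise disjoint groups $V_1,\dots,V_m$ with $V=V_1\cup\dots\cup V_m$; $\alpha,\beta\in\mathbb{R}_{\ge 0}^m$ and $b$ is a positive integer. Let $\mathcal{F}=\{S\subseteq V: |S|\le b\}$. Problem $\mathbf{P.0}$: maximize $\sum_{S\in\mathcal{F}} x_S f(S)$ over $x\in[0,1]^{\mathcal{F}}$ subject to $\alpha_t\le \sum_{S\in\mathcal{F}} x_S |S\cap V_t|\le \beta_t$ for all $t\in[m]$ and $\sum_{S\in\mathcal{F}}x_S\le 1$; $OPT$ denotes its optimal value. Problem $\mathbf{P.2}$: maximize $f(S)$ over $S\in\mathcal{F}$ subject to $\lfloor\alpha_t\rfloor\le|S\cap V_t|\le\lceil\beta_t\rceil$ for all $t\in[m]$. *)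

From mathcomp Require Import all_boot all_order all_algebra.
From mathcomp Require Import all_classical all_reals all_analysis.
Set Implicit Arguments. Unset Strict Implicit. Unset Printing Implicit Defensive.
Import Order.TTheory GRing.Theory Num.Theory.
Local Open Scope ring_scope.

Section Defs.
Variables (R : realType) (V : finType) (m : nat).

Definition nonneg_fun (f : {set V} -> R) := forall S, 0 <= f S.
Definition monotone_fun (f : {set V} -> R) :=
  forall S T : {set V}, S \subset T -> f S <= f T.
Definition submodular_fun (f : {set V} -> R) :=
  forall S T : {set V}, f (S :|: T) + f (S :&: T) <= f S + f T.

(* the groups: V_t = [set v | grp v == t]; pairwise disjoint, covering V *)
Definition group_of (grp : V -> 'I_m) (t : 'I_m) : {set V} := [set v | grp v == t].

(* P.0 : variables x_S for S in F = {S : |S| <= b}; x is given on all of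
   {set V} but only its values on F matter *)
Definition P0_feasible (grp : V -> 'I_m) (alpha beta : 'I_m -> R) (b : nat)
  (x : {set V} -> R) :=
  [/\ forall S : {set V}, (#|S| <= b)%N -> 0 <= x S <= 1,
      forall t : 'I_m,
        alpha t <= \sum_(S : {set V} | (#|S| <= b)%N) x S * (#|S :&: group_of grp t|)%:R
        <= beta t
    & \sum_(S : {set V} | (#|S| <= b)%N) x S <= 1].

Definition P0_obj (f : {set V} -> R) (b : nat) (x : {set V} -> R) :=
  \sum_(S : {set V} | (#|S| <= b)%N) x S * f S.

Definition P0_optimal_value (f : {set V} -> R) grp alpha beta b (OPT : R) :=
  (exists x, P0_feasible grp alpha beta b x /\ P0_obj f b x = OPT) /\
  (forall y, P0_feasible grp alpha beta b y -> P0_obj f b y <= OPT).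

Definition P2_feasible (grp : V -> 'I_m) (alpha beta : 'I_m -> R) (b : nat)
  (S : {set V}) :=
  (#|S| <= b)%N /\
  forall t : 'I_m,
    (Num.floor (alpha t) <= (#|S :&: group_of grp t|)%:Z)%R /\
    ((#|S :&: group_of grp t|)%:Z <= Num.ceil (beta t))%R.

Definition P2_optimal (f : {set V} -> R) grp alpha beta b (A : {set V}) :=
  P2_feasible grp alpha beta b A /\
  forall S, P2_feasible grp alpha beta b S -> f S <= f A.

End Defs.

From mathcomp Require Import all_boot all_order all_algebra.
From mathcomp Require Import all_classical all_reals all_analysis.
From mathcomp Require Import ring lra zify.
(* Re-imported so that the finite-set operations of finset take precedence
   over their namesakes for classical sets. *)
From mathcomp Require Import fintype finset.
Import Order.TTheory GRing.Theory Num.Theory.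
Local Open Scope ring_scope.
Set Implicit Arguments. Unset Strict Implicit. Unset Printing Implicit Defensive.

(* Let x be an optimal solution of P.0 (value OPT) and A an optimal solution
   of P.2; we prove OPT <= 2 f(A), which suffices since 2 (1 - 1/e)^2 <= 1.
   Let y_v be the probability that x selects v, gain(v) = f(A + v) - f(A) and
   loss(a) = f(A) - f(A - a).  Submodularity gives
     OPT <= f(A) + sum_v y_v gain(v)   and   sum_(a in A) loss(a) <= f(A),
   so it remains to show sum_v y_v gain(v) <= sum_(a in A) loss(a).  Since A
   is optimal against feasible swaps and additions, gains of newcomers are
   bounded by losses within a group, and across groups by a common threshold
   mu (which vanishes unless the budget b is exhausted).  A per-group real
   inequality bounds each group's weighted gains by its losses plus mu times
   its excess load; summing over groups, the threshold terms are nonpositive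
   by the budget constraint.  Finally, P.2 is feasible: take floor(alpha_t)
   elements from each group, and an optimal set exists by finiteness. *)

(* 1/e >= 8/27, from e^(-1/3) >= 1 - 1/3; this yields 2 (1 - 1/e)^2 <= 1. *)
Lemma inv_e_ge (R : realType) : 8 / 27 <= (expR 1)^-1 :> R.
Proof.
have e3 : (expR 1)^-1 = expR (- (1/3)) ^+ 3 :> R.
  by rewrite -expRN -expRM_natr; congr expR; field.
have h : 1 - 1/3 <= expR (- (1/3)) :> R by exact: expR_ge1Dx.
rewrite e3; apply: le_trans (lerXn2r _ _ _ h); rewrite ?nnegrE ?expR_ge0 //; last by lra.
by rewrite !exprS expr0; lra.
Qed.

Lemma two_sq_one_sub_inv_e_le1 (R : realType) : 2 * (1 - (expR 1)^-1) ^+ 2 <= 1 :> R.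
Proof.
have hlo := inv_e_ge R.
have hup : (expR 1)^-1 <= 1 :> R by rewrite -expRN expR_le1; lra.
set z := (expR 1)^-1 in hlo hup *; nra.
Qed.

Lemma finset_ind (T : finType) (P : {set T} -> Prop) :
  P set0 -> (forall (v : T) (S : {set T}), v \notin S -> P S -> P (v |: S)) -> forall S, P S.
Proof.
move=> P0 Padd S; elim: {S}#|S| {-2}S (erefl #|S|) => [|n IH] S hS.
  by rewrite (cards0_eq hS).
have [v vS] : exists v, v \in S by apply/set0Pn; rewrite -card_gt0 hS.
rewrite -(setD1K vS); apply: Padd; first by rewrite !inE eqxx.
by apply: IH; move: hS; rewrite (cardsD1 v S) vS => -[].
Qed.

Lemma exists_subset_card (T : finType) (B : {set T}) k :
  (k <= #|B|)%N -> exists2 C : {set T}, C \subset B & #|C| = k.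
Proof.
move=> kB; exists [set v in take k (enum B)].
  by apply/subsetP => v; rewrite inE => /mem_take; rewrite mem_enum.
rewrite cardsE (card_uniqP _) ?take_uniq ?enum_uniq // size_take -cardE.
by case: ltngtP kB => // ->.
Qed.

Section Submodular.
Variables (R : realType) (V : finType) (f : {set V} -> R).
Hypotheses (f_mono : monotone_fun f) (f_sub : submodular_fun f).
Implicit Types (X Y A S : {set V}) (v a : V).

Definition gain (X : {set V}) (v : V) : R := f (v |: X) - f X.

Lemma gain_ge0 X v : 0 <= gain X v.
Proof. by rewrite subr_ge0; apply: f_mono; apply: subsetUr. Qed.

Lemma gain_mem X v : v \in X -> gain X v = 0.
Proof. by move=> vX; rewrite /gain (setUidPr _) ?subrr // sub1set. Qed.

Lemma gain_antitone X Y v : Y \subset X -> gain X v <= gain Y v.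
Proof.
move=> sYX; have [vX|vX] := boolP (v \in X); first by rewrite gain_mem ?gain_ge0.
have := f_sub (v |: Y) X.
have -> : (v |: Y) :|: X = v |: X by rewrite -setUA (setUidPr sYX).
have -> : (v |: Y) :&: X = Y.
  by rewrite setIUl (setIidPl sYX) (disjoint_setI0 _) ?set0U // disjoints1.
by rewrite /gain; lra.
Qed.

Lemma union_le_sum_gain A S : f (A :|: S) <= f A + \sum_(v in S) gain A v.
Proof.
elim/finset_ind: S => [|v S vS IH]; first by rewrite setU0 big_set0 addr0.
rewrite big_setU1 //= setUCA.
have := gain_antitone v (subsetUl A S); rewrite /gain in IH *; lra.
Qed.

Definition loss A a : R := f A - f (A :\ a).

Lemma loss_ge0 A a : 0 <= loss A a.
Proof. by rewrite subr_ge0; apply: f_mono; apply: subsetDl. Qed.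

Lemma sum_loss_le A : \sum_(a in A) loss A a <= f A - f set0.
Proof.
elim/finset_ind: A => [|v S vS IH]; first by rewrite big_set0 subrr.
rewrite big_setU1 //= {1}/loss setU1K //.
suff: \sum_(a in S) loss (v |: S) a <= \sum_(a in S) loss S a by lra.
apply: ler_sum => a aS.
have e1 : a |: ((v |: S) :\ a) = v |: S by rewrite setD1K // setU1r.
have e2 : a |: (S :\ a) = S by rewrite setD1K.
have := gain_antitone a (_ : S :\ a \subset (v |: S) :\ a).
rewrite /gain /loss e1 e2; apply; exact: setSD (subsetUr _ _).
Qed.

End Submodular.

Lemma sum_indicator (R : numDomainType) (V : finType) (S B : {set V}) :
  \sum_(v in B) (v \in S)%:R = #|S :&: B|%:R :> R.
Proof.
rewrite -sumr_const (bigID (mem S)) /= [X in _ + X]big1 ?addr0 => [|v /andP[_ /negbTE ->]] //.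
by apply: congr_big => // [v|v /andP[_ ->]]; rewrite // !inE andbC.
Qed.

Section Groups.
Variables (V : finType) (m : nat) (grp : V -> 'I_m).
Implicit Types (X B : {set V}) (v a : V) (t : 'I_m).

Definition gcount X t : nat := #|X :&: group_of grp t|.

Lemma gcountE X t : gcount X t = (\sum_(v in X) (grp v == t))%N.
Proof.
rewrite /gcount -sum1_card big_mkcond [RHS]big_mkcond /=; apply: eq_bigr => v _.
by rewrite !inE; case: (v \in X); case: (grp v == t).
Qed.

Lemma gcount_setU1 X v t :
  v \notin X -> gcount (v |: X) t = ((grp v == t) + gcount X t)%N.
Proof. by move=> vX; rewrite !gcountE big_setU1. Qed.

Lemma gcount_setD1 X a t :
  a \in X -> gcount X t = ((grp a == t) + gcount (X :\ a) t)%N.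
Proof. by move=> aX; rewrite !gcountE (big_setD1 a aX). Qed.

Lemma sum_over_groups B (R : nmodType) (F : V -> R) :
  \sum_(v in B) F v = \sum_t \sum_(v in B :&: group_of grp t) F v.
Proof.
rewrite (partition_big grp xpredT) //=; apply: eq_bigr => t _.
by apply: eq_bigl => v; rewrite !inE.
Qed.

Lemma sum_over_all_groups (R : nmodType) (F : V -> R) :
  \sum_v F v = \sum_t \sum_(v in group_of grp t) F v.
Proof.
rewrite (partition_big grp xpredT) //=; apply: eq_bigr => t _.
by apply: eq_bigl => v; rewrite !inE.
Qed.

Lemma card_sum_gcount X : #|X| = (\sum_t gcount X t)%N.
Proof.
rewrite -sum1_card (partition_big grp xpredT) //=; apply: eq_bigr => t _.
by rewrite /gcount -sum1_card; apply: eq_bigl => v; rewrite !inE.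
Qed.

End Groups.

Section Exchange.
Variables (R : realType) (V : finType) (m : nat) (grp : V -> 'I_m).
Variables (alpha beta : 'I_m -> R) (b : nat).
Implicit Types (A : {set V}) (v a : V) (t : 'I_m).

Local Notation feasible := (P2_feasible grp alpha beta b).

Definition can_add A t : bool := (gcount grp A t)%:Z < Num.ceil (beta t).
Definition can_remove A t : bool := Num.floor (alpha t) < (gcount grp A t)%:Z.

Lemma feasible_bounds A t : feasible A ->
  Num.floor (alpha t) <= (gcount grp A t)%:Z <= Num.ceil (beta t).
Proof. by case=> _ /(_ t) [lo up]; rewrite lo up. Qed.

Lemma feasible_add A v : feasible A -> v \notin A -> (#|A| < b)%N ->
  can_add A (grp v) -> feasible (v |: A).
Proof.
move=> hA vA hb ok; split => [|t]; first by rewrite cardsU1 vA.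
have /andP[lo up] := feasible_bounds t hA.
rewrite -/(gcount grp _ t) gcount_setU1 //; move: lo up ok.
by case: (eqVneq (grp v) t) => [<-|_] /=; rewrite /can_add; lia.
Qed.

Lemma feasible_swap A a v : feasible A -> a \in A -> v \notin A ->
  grp v = grp a \/ can_add A (grp v) /\ can_remove A (grp a) ->
  feasible (v |: (A :\ a)).
Proof.
move=> hA aA vA hex; have vA' : v \notin A :\ a by rewrite inE negb_and vA orbT.
split => [|t].
  by move: hA.1; rewrite cardsU1 vA' (cardsD1 a A) aA.
have /andP[lo up] := feasible_bounds t hA.
rewrite -/(gcount grp _ t) gcount_setU1 //.
move: lo up; rewrite !(gcount_setD1 _ _ aA).
case: hex => [->|[add rem]]; first lia.
move: add rem; rewrite /can_add /can_remove !(gcount_setD1 _ _ aA).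
case: (eqVneq (grp v) t) => [->|_]; case: (eqVneq (grp a) t) => [->|_] /=; lia.
Qed.

Lemma count_ge_of_no_room A t (s : R) : s <= beta t -> ~~ can_add A t ->
  s <= (gcount grp A t)%:R.
Proof. by move=> sb; rewrite /can_add -leNgt ceil_le_int -pmulrn; exact: le_trans. Qed.

Lemma count_le_of_no_slack A t (s : R) : alpha t <= s -> ~~ can_remove A t ->
  (gcount grp A t)%:R <= s.
Proof. by move=> hs; rewrite /can_remove -leNgt floor_ge_int -pmulrn => /le_trans; apply. Qed.

Lemma count_gt0_of_slack A t : 0 <= alpha t -> can_remove A t ->
  (0 < gcount grp A t)%N.
Proof.
rewrite /can_remove -floor_ge0 => f0 lt; rewrite -ltz_nat; exact: le_lt_trans lt.
Qed.

End Exchange.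

(* For one group, C is
   the weighted gain of newcomers, Y and W the loads outside and inside A, D
   the total loss of its n members, mu the threshold and K a bound on single
   gains.  The hypotheses record same-group swaps (C n <= Y D), room (gains
   below mu), slack (mu below each loss) and the load bounds forced when the
   group has no room (Y + W <= n) or no slack (n <= Y + W). *)
Lemma group_exchange_ineq (R : realFieldType) (C D Y W mu K n : R) (room slack : bool) :
  0 <= mu -> 0 <= Y -> 0 <= W -> 0 <= D -> n = 0 \/ 1 <= n ->
  C * n <= Y * D -> C <= Y * K ->
  (room -> C <= Y * mu) -> (slack -> 1 <= n /\ n * mu <= D) ->
  (~~ room -> Y + W <= n) -> (~~ slack -> n <= Y + W) ->
  C <= D + mu * (Y + W - n).
Proof.
move=> mu0 Y0 W0 D0 n01 CnYD CYK.
have Wmu : 0 <= W * mu by apply: mulr_ge0.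
case: room slack => [] [] /=.
- (* room and slack: weigh C <= Y mu against C n <= Y D according to Y vs n *)
  move=> /(_ isT) CYmu /(_ isT) [n1 nmuD] _ _.
  suff : C * n <= (D + mu * (Y + W - n)) * n by rewrite ler_pM2r; lra.
  case: (lerP n Y) => hYn; last by nra.
  have : C * n <= Y * mu * n by rewrite ler_pM2r; lra.
  nra.
- (* room, no slack: n <= Y + W, so the threshold term is nonnegative *)
  move=> /(_ isT) CYmu _ _ /(_ isT) hn.
  case: n01 => [n0|n1]; first by nra.
  case: (lerP Y n) => hYn.
    have CD : C <= D by rewrite -(ler_pM2r (_ : 0 < n)); nra.
    have : 0 <= mu * (Y + W - n) by apply: mulr_ge0; lra.
    lra.
  suff : C * Y <= (D + mu * (Y + W - n)) * Y by rewrite ler_pM2r; lra.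
  have : 0 <= W * mu * Y by apply: mulr_ge0.
  nra.
- (* no room, slack: Y + W <= n and mu <= D / n *)
  move=> _ /(_ isT) [n1 nmuD] /(_ isT) hYW _.
  suff : C * n <= (D + mu * (Y + W - n)) * n by rewrite ler_pM2r; lra.
  nra.
- (* neither: the load equals n exactly *)
  move=> _ _ /(_ isT) hYW /(_ isT) hn.
  have -> : Y + W - n = 0 by lra.
  case: n01 => [n0|n1].
    have Yz : Y = 0 by lra.
    by move: CYK; rewrite Yz mul0r; lra.
  suff : C * n <= D * n by rewrite ler_pM2r; lra.
  nra.
Qed.

Section Marginals.
Variables (R : realType) (V : finType) (m : nat) (grp : V -> 'I_m).
Variables (alpha beta : 'I_m -> R) (b : nat) (x : {set V} -> R).
Hypothesis hx : P0_feasible grp alpha beta b x.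
Implicit Types (B S : {set V}) (v : V).

Definition marginal v : R := \sum_(S : {set V} | (#|S| <= b)%N) x S * (v \in S)%:R.

Lemma weight_ge0 S : (#|S| <= b)%N -> 0 <= x S.
Proof. by case: hx => h01 _ _ /h01 /andP[]. Qed.

Lemma marginal_ge0 v : 0 <= marginal v.
Proof. by apply: sumr_ge0 => S /weight_ge0 xS; rewrite mulr_ge0. Qed.

Lemma sum_marginal B :
  \sum_(v in B) marginal v = \sum_(S : {set V} | (#|S| <= b)%N) x S * #|S :&: B|%:R.
Proof.
rewrite exchange_big /=; apply: eq_bigr => S _.
by rewrite -mulr_sumr sum_indicator.
Qed.

Lemma sum_marginal_group t :
  alpha t <= \sum_(v in group_of grp t) marginal v <= beta t.
Proof. by rewrite sum_marginal; case: hx => _ /(_ t). Qed.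

Lemma sum_marginal_le B k :
  (forall S, (#|S| <= b)%N -> (#|S :&: B| <= k)%N) -> \sum_(v in B) marginal v <= k%:R.
Proof.
move=> hk; rewrite sum_marginal; case: hx => _ _ hsum.
apply: (@le_trans _ _ (\sum_(S : {set V} | (#|S| <= b)%N) x S * k%:R)).
  by apply: ler_sum => S hS; rewrite ler_wpM2l ?ler_nat ?hk ?weight_ge0.
by rewrite -mulr_suml ler_piMl.
Qed.

Lemma sum_marginal_total : \sum_v marginal v <= b%:R.
Proof.
have -> : \sum_v marginal v = \sum_(v in [set: V]) marginal v.
  by apply: eq_bigl => v; rewrite inE.
by apply: sum_marginal_le => S; rewrite setIT.
Qed.

End Marginals.

Section LocalOptimality.
Variables (R : realType) (V : finType) (m : nat) (f : {set V} -> R) (grp : V -> 'I_m).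
Hypotheses (f_mono : monotone_fun f) (f_sub : submodular_fun f).
Variables (alpha beta : 'I_m -> R) (b : nat) (A : {set V}).
Hypothesis hA : P2_optimal f grp alpha beta b A.
Implicit Types (v a : V).

Lemma gain_le_loss a v : a \in A -> v \notin A ->
  grp v = grp a \/ can_add grp beta A (grp v) /\ can_remove grp alpha A (grp a) ->
  gain f A v <= loss f A a.
Proof.
move=> aA vA hex; have [hfeas hopt] := hA.
have := hopt _ (feasible_swap hfeas aA vA hex).
have := gain_antitone f_mono f_sub v (subsetDl A [set a]).
by rewrite /gain /loss; lra.
Qed.

Lemma gain_le0 v : v \notin A -> (#|A| < b)%N -> can_add grp beta A (grp v) ->
  gain f A v <= 0.
Proof.
move=> vA hb ok; have [hfeas hopt] := hA.
by have := hopt _ (feasible_add hfeas vA hb ok); rewrite /gain; lra.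
Qed.

(* The threshold: the largest gain of an outsider whose group has room (or
   0).  By the cross-group swaps it lies below every loss in a group with
   slack. *)
Definition threshold : R :=
  \big[Order.max/0]_(v | (v \notin A) && can_add grp beta A (grp v)) gain f A v.

Lemma threshold_ge0 : 0 <= threshold.
Proof. exact: bigmax_ge_id. Qed.

Lemma gain_le_threshold v : v \notin A -> can_add grp beta A (grp v) ->
  gain f A v <= threshold.
Proof. by move=> vA ok; apply: le_bigmax_cond; rewrite vA. Qed.

Lemma threshold_le_loss a : a \in A -> can_remove grp alpha A (grp a) ->
  threshold <= loss f A a.
Proof.
move=> aA rem; apply: bigmax_le => [|v /andP[vA ok]]; first exact: loss_ge0.
by apply: gain_le_loss => //; right.
Qed.

(* The threshold vanishes unless the budget is exhausted. *)
Lemma threshold_budget (s : R) : s <= b%:R -> threshold * (s - #|A|%:R) <= 0.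
Proof.
move=> sb; have [hfeas _] := hA.
have [Ab|Ab] := eqVneq #|A| b.
  by rewrite mulr_ge0_le0 ?threshold_ge0 // subr_le0 Ab.
have hb : (#|A| < b)%N by rewrite ltn_neqAle Ab hfeas.1.
suff -> : threshold = 0 by rewrite mul0r.
apply/eqP; rewrite eq_le threshold_ge0 andbT.
by apply: bigmax_le => // v /andP[vA ok]; apply: gain_le0.
Qed.

End LocalOptimality.

Lemma weighted_sum_le (R : numDomainType) (I : finType) (B : {pred I})
    (w h : I -> R) (c : R) :
  (forall i, i \in B -> 0 <= w i) -> (forall i, i \in B -> h i <= c) ->
  \sum_(i in B) w i * h i <= (\sum_(i in B) w i) * c.
Proof.
move=> w0 hc; rewrite mulr_suml; apply: ler_sum => i iB.
by rewrite ler_wpM2l ?w0 ?hc.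
Qed.

Section Core.
Variables (R : realType) (V : finType) (m : nat) (f : {set V} -> R) (grp : V -> 'I_m).
Hypotheses (f_ge0 : nonneg_fun f) (f_mono : monotone_fun f) (f_sub : submodular_fun f).
Variables (alpha beta : 'I_m -> R) (b : nat).
Hypothesis alpha_ge0 : forall t, 0 <= alpha t.
Variables (x : {set V} -> R) (A : {set V}).
Hypotheses (hx : P0_feasible grp alpha beta b x) (hA : P2_optimal f grp alpha beta b A).

Local Notation y := (marginal b x).
Local Notation mu := (threshold f grp beta A).

Lemma group_bound t :
  \sum_(v in ~: A :&: group_of grp t) y v * gain f A v <=
  \sum_(a in A :&: group_of grp t) loss f A a +
  mu * (\sum_(v in group_of grp t) y v - (gcount grp A t)%:R).
Proof.
set Out := ~: A :&: group_of grp t; set In := A :&: group_of grp t.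
have n_In : (gcount grp A t)%:R = #|In|%:R :> R by [].
have inOut v : v \in Out -> v \notin A /\ grp v = t.
  by rewrite !inE => /andP[-> /eqP].
have inIn a : a \in In -> a \in A /\ grp a = t by rewrite !inE => /andP[-> /eqP].
have y0 v : v \in Out -> 0 <= y v by move=> _; exact: (marginal_ge0 hx).
have load : \sum_(v in group_of grp t) y v = \sum_(v in Out) y v + \sum_(v in In) y v.
  by rewrite (big_setID A) setDE addrC ![group_of _ _ :&: _]setIC.
rewrite load; apply: (@group_exchange_ineq R _ _ _ _ _ (f [set: V]) _
  (can_add grp beta A t) (can_remove grp alpha A t)).
- exact: threshold_ge0.
- exact: sumr_ge0.
- by apply: sumr_ge0 => v _; exact: (marginal_ge0 hx).
- by apply: sumr_ge0 => a _; exact: (loss_ge0 f_mono).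
- by case: (gcount grp A t) => [|k]; [left|right; rewrite ler1n].
- rewrite n_In mulr_suml; under eq_bigr do rewrite -mulrA.
  apply: weighted_sum_le => // v /inOut [vA gv].
  rewrite mulr_natr -sumr_const; apply: ler_sum => a /inIn [aA ga].
  by apply: (gain_le_loss f_mono f_sub hA) => //; left; rewrite gv ga.
- apply: weighted_sum_le => // v _; rewrite /gain.
  have := f_ge0 A; have := f_mono (subsetT (v |: A)); lra.
- move=> room; apply: weighted_sum_le => // v /inOut [vA gv].
  by apply: gain_le_threshold => //; rewrite gv.
- move=> slack; split; first by rewrite ler1n; exact: count_gt0_of_slack.
  rewrite n_In mulr_natl -sumr_const; apply: ler_sum => a /inIn [aA ga].
  by apply: (threshold_le_loss f_mono f_sub hA) => //; rewrite ga.
- by apply: count_ge_of_no_room; rewrite -load; case/andP: (sum_marginal_group hx t).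
- by apply: count_le_of_no_slack; rewrite -load; case/andP: (sum_marginal_group hx t).
Qed.

(* Summing the group bounds: the weighted gains are paid for by the losses
   of A, since the threshold term is nonpositive in total. *)
Lemma sum_gain_le_sum_loss :
  \sum_v y v * gain f A v <= \sum_(a in A) loss f A a.
Proof.
have -> : \sum_v y v * gain f A v = \sum_(v in ~: A) y v * gain f A v.
  rewrite (bigID (mem A)) /= big1 ?add0r => [|v vA]; last by rewrite (gain_mem f vA) mulr0.
  by apply: eq_bigl => v; rewrite inE.
rewrite (sum_over_groups grp (~: A)) (sum_over_groups grp A).
apply: le_trans (ler_sum _ (fun t _ => group_bound t)) _.
rewrite big_split /= -mulr_sumr sumrB -natr_sum -card_sum_gcount.
rewrite -sum_over_all_groups.
have := threshold_budget hA (sum_marginal_total hx); lra.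
Qed.

End Core.

Section MainBound.
Variables (R : realType) (V : finType) (m : nat) (f : {set V} -> R) (grp : V -> 'I_m).
Hypotheses (f_ge0 : nonneg_fun f) (f_mono : monotone_fun f) (f_sub : submodular_fun f).
Variables (alpha beta : 'I_m -> R) (b : nat) (x : {set V} -> R).
Hypothesis hx : P0_feasible grp alpha beta b x.

Lemma obj_le_gain (A : {set V}) :
  P0_obj f b x <= f A + \sum_v marginal b x v * gain f A v.
Proof.
have [_ _ hsum] := hx.
have split_gain S : \sum_(v in S) gain f A v = \sum_v (v \in S)%:R * gain f A v.
  by rewrite big_mkcond; apply: eq_bigr => v _; case: (v \in S); rewrite ?mul1r ?mul0r.
have -> : \sum_v marginal b x v * gain f A v =
          \sum_(S : {set V} | (#|S| <= b)%N) x S * \sum_(v in S) gain f A v.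
  under eq_bigr do rewrite mulr_suml.
  rewrite exchange_big /=; apply: eq_bigr => S _.
  by rewrite split_gain mulr_sumr; apply: eq_bigr => v _; rewrite mulrA.
apply: (@le_trans _ _ (\sum_(S : {set V} | (#|S| <= b)%N) x S * (f A + \sum_(v in S) gain f A v))).
  apply: ler_sum => S hS; rewrite ler_wpM2l ?(weight_ge0 hx) //.
  apply: le_trans (union_le_sum_gain f_mono f_sub A S); apply: f_mono; exact: subsetUr.
under eq_bigr do rewrite mulrDr.
rewrite big_split /= -mulr_suml lerD2r ler_piMl //.
Qed.

Lemma obj_le_twice_optimal (A : {set V}) :
  (forall t, 0 <= alpha t) -> P2_optimal f grp alpha beta b A ->
  P0_obj f b x <= 2 * f A.
Proof.
move=> alpha_ge0 hA.
have := obj_le_gain A.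
have := sum_gain_le_sum_loss f_ge0 f_mono f_sub alpha_ge0 hx hA.
have := sum_loss_le f_mono f_sub A; have := f_ge0 set0; lra.
Qed.

(* Rounding the lower bounds down gives a P.2-feasible set: take
   floor (alpha t) elements from each group. *)
Lemma P2_feasible_exists :
  (forall t, 0 <= alpha t) -> exists S, P2_feasible grp alpha beta b S.
Proof.
move=> alpha_ge0; pose k t := `|Num.floor (alpha t)|%N.
have kZ t : (k t)%:Z = Num.floor (alpha t) by rewrite /k gez0_abs // floor_ge0.
have k_le t : (k t)%:R <= alpha t by rewrite pmulrn kZ floor_le.
have k_group t : (k t <= #|group_of grp t|)%N.
  rewrite -(ler_nat R); apply: le_trans (k_le t) _.
  case/andP: (sum_marginal_group hx t) => + _; move/le_trans; apply.
  by apply: (sum_marginal_le hx) => S _; exact/subset_leq_card/subsetIr.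
have k_sum : (\sum_t k t <= b)%N.
  rewrite -(ler_nat R) natr_sum; apply: le_trans (sum_marginal_total hx).
  rewrite (sum_over_all_groups grp); apply: ler_sum => t _; apply: le_trans (k_le t) _.
  by case/andP: (sum_marginal_group hx t).
have /fin_all_exists [T hT] : forall t, exists C : {set V},
    C \subset group_of grp t /\ #|C| = k t.
  by move=> t; have [C ? ?] := exists_subset_card (k_group t); exists C.
pose S := [set v | v \in T (grp v)].
have S_count t : gcount grp S t = k t.
  rewrite /gcount; suff -> : S :&: group_of grp t = T t by rewrite (hT t).2.
  apply/setP => v; rewrite !inE.
  have [<-|ne] := eqVneq (grp v) t; first by rewrite andbT.
  rewrite andbF; apply/esym/negbTE; move: ne; apply: contra.
  by move=> /(subsetP (hT t).1); rewrite inE.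
exists S; split; first by rewrite (card_sum_gcount grp); under eq_bigr do rewrite S_count.
move=> t; rewrite -/(gcount grp S t) S_count kZ lexx; split => //.
rewrite -(ler_int R); apply: le_trans (floor_le _) _.
case/andP: (sum_marginal_group hx t) => lo up.
by apply: le_trans (ceil_ge _); apply: le_trans lo up.
Qed.

End MainBound.

Lemma P2_optimal_exists (R : realType) (V : finType) (m : nat) (f : {set V} -> R)
    (grp : V -> 'I_m) (alpha beta : 'I_m -> R) (b : nat) (S : {set V}) :
  P2_feasible grp alpha beta b S -> exists A, P2_optimal f grp alpha beta b A.
Proof.
move=> hS; have feasS : [pred X | `[< P2_feasible grp alpha beta b X >]] S.
  exact/asboolP.
case: (arg_maxP f feasS) => A /asboolP feasA maxA.
by exists A; split => // X /asboolP /maxA.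
Qed.

Theorem lemma3 (R : realType) (V : finType) (m : nat)
  (f : {set V} -> R) (grp : V -> 'I_m) (alpha beta : 'I_m -> R) (b : nat)
  (OPT : R) :
  nonneg_fun f -> monotone_fun f -> submodular_fun f ->
  (forall t, 0 <= alpha t) -> (forall t, 0 <= beta t) -> (0 < b)%N ->
  P0_optimal_value f grp alpha beta b OPT ->
  [/\ exists S, P2_feasible grp alpha beta b S,
      forall A, P2_optimal f grp alpha beta b A ->
        (1 - (expR 1)^-1) ^+ 2 * OPT <= f A
    & exists A : {set V}, (#|A| <= b)%N /\
        (forall t : 'I_m,
          (Num.floor (alpha t) <= (#|A :&: group_of grp t|)%:Z)%R /\
          ((#|A :&: group_of grp t|)%:Z <= Num.ceil (beta t))%R) /\
        (1 - (expR 1)^-1) ^+ 2 * OPT <= f A].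
Proof.
move=> f_ge0 f_mono f_sub alpha_ge0 _ _ [[x [hx <-]] _].
have [S0 hS0] := P2_feasible_exists hx alpha_ge0.
have bound A : P2_optimal f grp alpha beta b A -> (1 - (expR 1)^-1) ^+ 2 * P0_obj f b x <= f A.
  move=> hA; have := obj_le_twice_optimal f_ge0 f_mono f_sub hx alpha_ge0 hA.
  have := two_sq_one_sub_inv_e_le1 R; have := f_ge0 A.
  set c := (1 - _) ^+ 2; have : 0 <= c by exact: sqr_ge0.
  nra.
have [A hA] := P2_optimal_exists f hS0.
split; [by exists S0 | exact: bound | exists A].
by have [[Ab Agrp] _] := hA; split => //; split => //; exact: bound.
Qed.
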